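(* Let $V$ be a vector space over a field $\mathbb{K}$ and $F$ a bilinear form on $V$, and let $\lambda_F\in\mathrm{End}(\mathcal{T}(V))$ be defined by $\lambda_F(u)=\Lambda_F(u)(1)$. Then: (i) $\lambda_F(1)=1$ and $\lambda_F(x)=x$ for $x\in V$; (ii) $\lambda_F(x\otimes u)=i_x^F(\lambda_F(u))+x\otimes\lambda_F(u)$ for $x\in V$, $u\in\mathcal{T}(V)$; (iii) $\lambda_F\circ i_f=i_f\circ\lambda_F$ for all $f\in V^*$; (iv) if $G$ is another bilinear form on $V$, then $\lambda_F\circ\lambda_G=\lambda_{F+G}$; (v) $\lambda_0=\mathrm{Id}_{\mathcal{T}(V)}$; (vi) $\lambda_F:\mathcal{T}(V)\to\mathcal{T}(V)$ is a bijection; (vii) $\lambda_F$ preserves parity: for $x_1,\dots,x_p\in V$, $\alpha(\lambda_F(x_1\otimes\cdots\otimes x_p))=(-1)^p\lambda_F(x_1\otimes\cdots\otimes x_p)$.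
   Context: $\mathcal{T}(V)$ is the tensor algebra of $V$ (product $\otimes$). $\alpha$ is the algebra automorphism of $\mathcal{T}(V)$ with $\alpha(x_1\otimes\cdots\otimes x_p)=(-1)^p x_1\otimes\cdots\otimes x_p$. For $x\in V$, $e_x(u)=x\otimes u$. For $f\in V^*$, $i_f$ is the unique linear map on $\mathcal{T}(V)$ with $i_f(1)=0$ and $i_f(x\otimes u)=f(x)u-x\otimes i_f(u)$ ($x\in V$). For a bilinear form $F$ and $x\in V$, $i_x^F:=i_{f_x}$ with $f_x(y)=F(x,y)$. $\Lambda_F:\mathcal{T}(V)\to\mathrm{End}(\mathcal{T}(V))$ is the unique unital algebra homomorphism with $\Lambda_F(x)=e_x+i_x^F$ for $x\in V$. *)

From HB Require Import structures.
From mathcomp Require Import all_boot all_order all_algebra.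
Set Implicit Arguments. Unset Strict Implicit. Unset Printing Implicit Defensive.
Import GRing.Theory.
Local Open Scope ring_scope.

(* Tensor algebra T(V) of a K-vector space V, given abstractly by its
   universal property: a K-algebra A with a linear map iota : V -> A
   such that every linear map V -> B into a K-algebra B extends uniquely
   to an algebra morphism A -> B.  The tensor product x (x) u (x in V,
   u in T(V)) is  iota x * u. *)

Section TensorAlgebra.
Variables (K : fieldType) (V : lmodType K).

Definition linmap (U W : lmodType K) (f : U -> W) :=
  forall (a : K) (u v : U), f (a *: u + v) = a *: f u + f v.
Definition linform (f : V -> K) :=
  forall (a : K) (u v : V), f (a *: u + v) = a * f u + f v.
Definition bilinear_form (F : V -> V -> K) :=
  (forall x, linform (F x)) /\ (forall y, linform (fun x => F x y)).

Definition is_tensor_algebra (A : algType K) (iota : V -> A) :=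
  linmap iota /\
  forall (B : algType K) (f : V -> B), linmap f ->
    exists g : A -> B,
      [/\ linmap g, g 1 = 1, (forall u v, g (u * v) = g u * g v),
          (forall x, g (iota x) = f x) &
          (forall g' : A -> B, linmap g' -> g' 1 = 1 ->
              (forall u v, g' (u * v) = g' u * g' v) ->
              (forall x, g' (iota x) = f x) -> forall u, g' u = g u)].

Variables (A : algType K) (iota : V -> A).

Definition ptensor (s : seq V) : A := \prod_(x <- s) iota x.

Definition is_alpha (alpha : A -> A) :=
  linmap alpha /\
  forall s : seq V, alpha (ptensor s) = (-1) ^+ size s *: ptensor s.

Definition is_contraction (f : V -> K) (i_f : A -> A) :=
  [/\ linmap i_f, i_f 1 = 0 &
      forall x u, i_f (iota x * u) = f x *: u - iota x * i_f u].

(* Lambda_F : T(V) -> End(T(V)), the unital algebra morphism with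
   Lambda_F(x) = e_x + i^F_x, where i : V^* -> End(T(V)) is the family of
   contractions i_f. *)
Definition is_Lambda (i : (V -> K) -> A -> A) (F : V -> V -> K)
    (Lam : A -> A -> A) :=
  [/\ forall u, linmap (Lam u),
      forall (a : K) u v w, Lam (a *: u + v) w = a *: Lam u w + Lam v w,
      forall w, Lam 1 w = w,
      forall u v w, Lam (u * v) w = Lam u (Lam v w) &
      forall x w, Lam (iota x) w = iota x * w + i (F x) w].

Definition lam (Lam : A -> A -> A) (u : A) : A := Lam u 1.

End TensorAlgebra.

Definition addform (K : fieldType) (V : lmodType K) (F G : V -> V -> K) :=
  fun x y => F x y + G x y.

From HB Require Import structures.
From mathcomp Require Import all_boot all_order all_algebra.
From mathcomp Require Import boolp.
Set Implicit Arguments. Unset Strict Implicit. Unset Printing Implicit Defensive.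
Import GRing.Theory.
Local Open Scope ring_scope.

(* Applying the universal property to the subalgebra spanned by the pure
   tensors shows that T(V) is spanned by them, so a linear map on T(V) is
   determined by its values on 1 and by how it interacts with x (x) -.  Every
   identity is then an induction on the length of a pure tensor, driven by the
   recursion lambda_F(x (x) u) = i_{F x}(lambda_F u) + x (x) lambda_F u.  The
   algebraic input is the anticommutation i_f i_g = - i_g i_f of contractions:
   it makes lambda_F commute with every i_f, which gives
   lambda_F o lambda_G = lambda_{F+G}; since lambda_0 = id, the map
   lambda_{-F} is inverse to lambda_F.  Both x (x) - and i_f anticommute with
   alpha, hence lambda_F commutes with alpha and preserves parity. *)

Section LinearMaps.
Variable K : fieldType.
Implicit Types U W X : lmodType K.

Lemma linmap0 U W (f : U -> W) : linmap f -> f 0 = 0.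
Proof.
move=> lf; have := lf 1 0 0; rewrite scale1r addr0 scale1r => E.
by apply: (addrI (f 0)); rewrite addr0 -E.
Qed.

Lemma linmapD U W (f : U -> W) : linmap f -> forall u v, f (u + v) = f u + f v.
Proof. by move=> lf u v; have := lf 1 u v; rewrite !scale1r. Qed.

Lemma linmapZ U W (f : U -> W) : linmap f -> forall a u, f (a *: u) = a *: f u.
Proof. by move=> lf a u; have := lf a u 0; rewrite !addr0 linmap0 // addr0. Qed.

Lemma linmapN U W (f : U -> W) : linmap f -> forall u, f (- u) = - f u.
Proof. by move=> lf u; rewrite -scaleN1r linmapZ // scaleN1r. Qed.

Lemma linmapB U W (f : U -> W) : linmap f -> forall u v, f (u - v) = f u - f v.
Proof. by move=> lf u v; rewrite linmapD // linmapN. Qed.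

Lemma linmap_comp U W X (f : U -> W) (g : W -> X) :
  linmap f -> linmap g -> linmap (g \o f).
Proof. by move=> lf lg a u v /=; rewrite lf lg. Qed.

Lemma linmap_add U W (f g : U -> W) :
  linmap f -> linmap g -> linmap (fun u => f u + g u).
Proof. by move=> lf lg a u v; rewrite lf lg scalerDr addrACA. Qed.

Lemma linmap_opp U W (f : U -> W) : linmap f -> linmap (fun u => - f u).
Proof. by move=> lf a u v; rewrite lf opprD scalerN. Qed.

Lemma linmap_zero U W : linmap (fun _ : U => 0 : W).
Proof. by move=> a u v; rewrite scaler0 addr0. Qed.

Variable V : lmodType K.
Implicit Types F G : V -> V -> K.

Lemma bilinear_form0 : bilinear_form (fun _ _ : V => 0 : K).
Proof. by split=> ? a u v; rewrite mulr0 addr0. Qed.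

Lemma bilinear_formN F : bilinear_form F -> bilinear_form (fun x y => - F x y).
Proof.
by move=> [lF lF']; split=> [x|y] a u v /=; rewrite ?lF ?lF' opprD mulrN.
Qed.

Lemma bilinear_formD F G :
  bilinear_form F -> bilinear_form G -> bilinear_form (addform F G).
Proof.
move=> [lF lF'] [lG lG']; rewrite /addform.
by split=> [x|y] a u v /=; rewrite ?lF ?lG ?lF' ?lG' mulrDr addrACA.
Qed.

End LinearMaps.

Section TensorAlgebra.
Variables (K : fieldType) (V : lmodType K) (A : algType K) (iota : V -> A).
Local Notation ptensor := (ptensor iota).

Lemma ptensor_nil : ptensor [::] = 1.
Proof. by rewrite /ptensor big_nil. Qed.

Lemma ptensor_cons x s : ptensor (x :: s) = iota x * ptensor s.
Proof. by rewrite /ptensor big_cons. Qed.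

Lemma ptensor_cat s t : ptensor (s ++ t) = ptensor s * ptensor t.
Proof. by rewrite /ptensor big_cat. Qed.

Definition lcomb (r : seq (K * seq V)) : A := \sum_(p <- r) p.1 *: ptensor p.2.

Definition spanned : pred A := fun u => `[< exists r, u = lcomb r >].

Lemma spanned_subalg_closed : GRing.subsemialg_closed spanned.
Proof.
split; [| split | |].
- apply/asboolP; exists [:: (1, [::])].
  by rewrite /lcomb big_seq1 scale1r ptensor_nil.
- by apply/asboolP; exists [::]; rewrite /lcomb big_nil.
- move=> _ _ /asboolP[r ->] /asboolP[r' ->]; apply/asboolP.
  by exists (r ++ r'); rewrite /lcomb big_cat.
- move=> a _ /asboolP[r ->]; apply/asboolP; exists [seq (a * p.1, p.2) | p <- r].
  rewrite /lcomb big_map scaler_sumr; apply: eq_bigr => p _ /=.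
  by rewrite scalerA.
- move=> _ _ /asboolP[r ->] /asboolP[r' ->]; apply/asboolP.
  exists [seq (p.1 * q.1, p.2 ++ q.2) | p <- r, q <- r'].
  rewrite /lcomb big_allpairs_dep mulr_suml; apply: eq_bigr => p _.
  rewrite mulr_sumr; apply: eq_bigr => q _ /=.
  by rewrite ptensor_cat -scalerAl -scalerAr scalerA.
Qed.

HB.instance Definition _ := GRing.isSubalgClosed.Build K A spanned
  spanned_subalg_closed.

Record spanned_elt := SpannedElt { spanned_val : A; spanned_valP : spanned spanned_val }.
HB.instance Definition _ := [isSub for spanned_val].
HB.instance Definition _ := [Choice of spanned_elt by <:].
HB.instance Definition _ := [SubChoice_isSubAlgebra of spanned_elt by <:].

Lemma spanned_iota x : spanned (iota x).
Proof.
apply/asboolP; exists [:: (1, [:: x])].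
by rewrite /lcomb big_seq1 scale1r ptensor_cons ptensor_nil mulr1.
Qed.

Hypothesis HT : is_tensor_algebra iota.

Lemma tensor_endo_id (h : A -> A) :
  linmap h -> h 1 = 1 -> {morph h : u v / u * v} ->
  (forall x, h (iota x) = iota x) -> forall u, h u = u.
Proof.
move=> lh h1 hM hiota u; have [liota univ] := HT.
have [g [_ _ _ _ g_uniq]] := univ _ iota liota.
by rewrite (g_uniq h) // -(g_uniq (fun v => v)).
Qed.

Lemma spanned_all u : spanned u.
Proof.
have [liota univ] := HT.
pose f x := SpannedElt (spanned_iota x).
have lf : linmap f by move=> a x y; apply: val_inj; rewrite /= liota.
have [g [lg g1 gM giota _]] := univ _ f lf.
have val_gK : forall u, spanned_val (g u) = u.
  apply: tensor_endo_id => [a v w /=|/=|v w /=|x /=]; rewrite ?lg ?g1 ?gM ?giota //.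
by rewrite -[u]val_gK spanned_valP.
Qed.

Lemma eq_linmap_ptensor (W : lmodType K) (f g : A -> W) :
  linmap f -> linmap g -> (forall s, f (ptensor s) = g (ptensor s)) ->
  forall u, f u = g u.
Proof.
move=> lf lg fg u; have /asboolP[r ->] := spanned_all u; rewrite /lcomb.
elim: r => [|p r IHr]; first by rewrite big_nil !linmap0.
by rewrite big_cons lf lg fg IHr.
Qed.

Lemma eq_linmap_ind (W : lmodType K) (f g : A -> W) :
  linmap f -> linmap g -> f 1 = g 1 ->
  (forall x u, f u = g u -> f (iota x * u) = g (iota x * u)) ->
  forall u, f u = g u.
Proof.
move=> lf lg fg1 fg_mul; apply: eq_linmap_ptensor => // s.
elim: s => [|x s IHs]; first by rewrite ptensor_nil.
by rewrite ptensor_cons fg_mul.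
Qed.

Variable alpha : A -> A.
Hypothesis Halpha : is_alpha iota alpha.

Lemma alpha1 : alpha 1 = 1.
Proof. by have := Halpha.2 [::]; rewrite ptensor_nil scale1r. Qed.

Lemma alpha_iota_mul x u : alpha (iota x * u) = - (iota x * alpha u).
Proof.
have [la alpha_ptensor] := Halpha.
have lmul : linmap (fun v : A => iota x * v).
  by move=> a v w; rewrite mulrDr scalerAr.
move: u; apply: eq_linmap_ptensor => [||s /=].
- exact: linmap_comp lmul la.
- exact: linmap_opp (linmap_comp la lmul).
rewrite -ptensor_cons !alpha_ptensor exprS mulN1r scaleNr ptensor_cons.
by rewrite scalerAr.
Qed.

Section Contraction.
Variable i : (V -> K) -> A -> A.
Hypothesis Hi : forall f, linform f -> is_contraction iota f (i f).

Lemma i_linmap f : linform f -> linmap (i f).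
Proof. by case/Hi. Qed.

Lemma i1 f : linform f -> i f 1 = 0.
Proof. by case/Hi. Qed.

Lemma i_iota_mul f : linform f ->
  forall x u, i f (iota x * u) = f x *: u - iota x * i f u.
Proof. by case/Hi. Qed.

Lemma i_form0 f : (forall x, f x = 0) -> forall u, i f u = 0.
Proof.
move=> f0; have lf : linform f by move=> a x y; rewrite !f0 mulr0 addr0.
apply: eq_linmap_ind; [exact: i_linmap | exact: linmap_zero | exact: i1 |].
by move=> x u IH; rewrite i_iota_mul // IH f0 scale0r mulr0 subrr.
Qed.

Lemma i_add f g h : linform f -> linform g -> (forall x, h x = f x + g x) ->
  forall u, i h u = i f u + i g u.
Proof.
move=> lf lg hE; have lh : linform h.
  by move=> a x y; rewrite !hE lf lg mulrDr addrACA.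
apply: eq_linmap_ind.
- exact: i_linmap.
- exact: linmap_add (i_linmap lf) (i_linmap lg).
- by rewrite !i1 // addr0.
move=> x u IH; rewrite !i_iota_mul // IH hE scalerDl mulrDr opprD.
by rewrite addrACA.
Qed.

Lemma i_anti f g : linform f -> linform g ->
  forall u, i f (i g u) = - i g (i f u).
Proof.
move=> lf lg; have lif := i_linmap lf; have lig := i_linmap lg.
apply: eq_linmap_ind.
- exact: linmap_comp lig lif.
- exact: linmap_opp (linmap_comp lif lig).
- by rewrite /= !i1 // (linmap0 lif) (linmap0 lig) oppr0.
move=> x u /= IH.
rewrite !i_iota_mul // (linmapB lif) (linmapB lig) (linmapZ lif) (linmapZ lig).
by rewrite !i_iota_mul // IH mulrN opprK opprB opprD addrA addrAC.
Qed.

Lemma alpha_i f : linform f -> forall u, alpha (i f u) = - i f (alpha u).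
Proof.
move=> lf; have [la _] := Halpha; have lif := i_linmap lf.
apply: eq_linmap_ind.
- exact: linmap_comp lif la.
- exact: linmap_opp (linmap_comp la lif).
- by rewrite /= alpha1 i1 // (linmap0 la) oppr0.
move=> x u /= IH.
rewrite i_iota_mul // (linmapB la) (linmapZ la) alpha_iota_mul IH.
by rewrite alpha_iota_mul (linmapN lif) opprK i_iota_mul // mulrN opprK.
Qed.

Section Lambda.
Variables (F : V -> V -> K) (L : A -> A -> A).
Hypothesis HL : is_Lambda iota i F L.

Lemma lam_linmap : linmap (lam L).
Proof. by case: HL => _ L_lin _ _ _ a u v; rewrite /lam L_lin. Qed.

Lemma lam1 : lam L 1 = 1.
Proof. by case: HL => _ _ L1 _ _; apply: L1. Qed.

Lemma lam_iota_mul x u : lam L (iota x * u) = i (F x) (lam L u) + iota x * lam L u.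
Proof. by case: HL => _ _ _ L_mul L_iota; rewrite /lam L_mul L_iota addrC. Qed.

Lemma lam_form0 : (forall x y, F x y = 0) -> forall u, lam L u = u.
Proof.
move=> F0; apply: eq_linmap_ind => //; [exact: lam_linmap | exact: lam1 |].
by move=> x u IH; rewrite lam_iota_mul IH i_form0 // add0r.
Qed.

Hypothesis HF : forall x, linform (F x).

Lemma lam_iota x : lam L (iota x) = iota x.
Proof. by rewrite -[iota x]mulr1 lam_iota_mul lam1 i1 // add0r. Qed.

Lemma lam_i f : linform f -> forall u, lam L (i f u) = i f (lam L u).
Proof.
move=> lf; have lif := i_linmap lf; apply: eq_linmap_ind.
- exact: linmap_comp lif lam_linmap.
- exact: linmap_comp lam_linmap lif.
- by rewrite /= i1 // lam1 i1 // (linmap0 lam_linmap).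
move=> x u /= IH.
rewrite i_iota_mul // (linmapB lam_linmap) (linmapZ lam_linmap) !lam_iota_mul IH.
by rewrite (linmapD lif) i_iota_mul // (i_anti lf (HF x)) opprD addrCA.
Qed.

Lemma lam_alpha u : alpha (lam L u) = lam L (alpha u).
Proof.
have [la _] := Halpha; move: u; apply: eq_linmap_ind.
- exact: linmap_comp lam_linmap la.
- exact: linmap_comp la lam_linmap.
- by rewrite /= lam1 alpha1 lam1.
move=> x u /= IH.
rewrite lam_iota_mul (linmapD la) (alpha_i (HF x)) alpha_iota_mul IH alpha_iota_mul.
by rewrite (linmapN lam_linmap) lam_iota_mul opprD.
Qed.

End Lambda.

Lemma lam_comp F G H (L1 L2 L3 : A -> A -> A) :
  (forall x, linform (F x)) -> (forall x, linform (G x)) ->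
  is_Lambda iota i F L1 -> is_Lambda iota i G L2 -> is_Lambda iota i H L3 ->
  (forall x y, H x y = F x y + G x y) ->
  forall u, lam L1 (lam L2 u) = lam L3 u.
Proof.
move=> lF lG HL1 HL2 HL3 HE; apply: eq_linmap_ind.
- exact: linmap_comp (lam_linmap HL2) (lam_linmap HL1).
- exact: lam_linmap HL3.
- by rewrite /= (lam1 HL2) (lam1 HL1) (lam1 HL3).
move=> x u /= IH.
rewrite (lam_iota_mul HL2) (linmapD (lam_linmap HL1)) (lam_i HL1) //.
rewrite (lam_iota_mul HL1) IH (lam_iota_mul HL3) (i_add (lF x) (lG x) (HE x)).
by rewrite addrA [_ + i _ _]addrC.
Qed.

End Contraction.

End TensorAlgebra.

Theorem mainTheorem3 (K : fieldType) (V : lmodType K) (A : algType K)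
    (iota : V -> A) (HT : is_tensor_algebra iota)
    (alpha : A -> A) (Halpha : is_alpha iota alpha)
    (i : (V -> K) -> A -> A)
    (Hi : forall f, linform f -> is_contraction iota f (i f))
    (Lam : (V -> V -> K) -> A -> A -> A)
    (HLam : forall F, bilinear_form F -> is_Lambda iota i F (Lam F))
    (F : V -> V -> K) (HF : bilinear_form F) :
  (lam (Lam F) 1 = 1 /\ (forall x, lam (Lam F) (iota x) = iota x)) /\
      (forall x u, lam (Lam F) (iota x * u)
                   = i (F x) (lam (Lam F) u) + iota x * lam (Lam F) u) /\
      (forall f, linform f -> forall u, lam (Lam F) (i f u) = i f (lam (Lam F) u)) /\
      (forall G, bilinear_form G ->
         forall u, lam (Lam F) (lam (Lam G) u) = lam (Lam (addform F G)) u) /\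
      (forall u, lam (Lam (fun _ _ => 0)) u = u) /\
      bijective (lam (Lam F)) /\
      (forall s : seq V, alpha (lam (Lam F) (ptensor iota s))
                         = (-1) ^+ size s *: lam (Lam F) (ptensor iota s)).
Proof.
have HL := HLam F HF; have [lF _] := HF.
have HNF := bilinear_formN HF; have [lNF _] := HNF.
have HL0 := HLam _ (bilinear_form0 V).
have lam0 : forall u, lam (Lam (fun _ _ => 0)) u = u.
  exact: lam_form0 HL0 (fun _ _ => erefl).
split; first by split; [exact: lam1 HL | exact: lam_iota HL lF].
split; first exact: lam_iota_mul HL.
split; first by move=> f; exact: (lam_i HT Hi HL lF).
split.
  move=> G HG; have [lG _] := HG.
  exact: (lam_comp HT Hi lF lG HL (HLam _ HG) (HLam _ (bilinear_formD HF HG))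
          (fun _ _ => erefl)).
split; first exact: lam0.
split.
  exists (lam (Lam (fun x y => - F x y))) => u; rewrite -[RHS]lam0.
  - exact: (lam_comp HT Hi lNF lF (HLam _ HNF) HL HL0 (fun _ _ => esym (addNr _))).
  - exact: (lam_comp HT Hi lF lNF HL (HLam _ HNF) HL0 (fun _ _ => esym (addrN _))).
move=> s; rewrite (lam_alpha HT Halpha Hi HL lF) Halpha.2.
exact: linmapZ (lam_linmap HL) _ _.
Qed.
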